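(* For every $\lambda>\lambda^*$, $G(e(\lambda))>0$ and $e(\lambda)<0$.
   Context: Standing setup. Let $\gamma>0$; let $a_1,\dots,a_p>0$ with weights $\omega_i>0$, $\sum_i\omega_i=1$, and $b_1,\dots,b_n>0$ with weights $\pi_j>0$, $\sum_j\pi_j=1$. Let $\mu$ be the limiting spectral distribution of $\mathbf{N}\mathbf{N}^T$ where $\mathbf{N}=\mathbf{A}^{1/2}\mathbf{G}\mathbf{B}^{1/2}$ is $k\times l$, $\mathbf{G}$ has iid mean-zero entries of variance $1/l$, $k/l\to\gamma$, and the spectral distributions of $\mathbf{A},\mathbf{B}$ converge to $\nu=\sum_i\omega_i\delta_{a_i}$ and $\underline{\nu}=\sum_j\pi_j\delta_{b_j}$. $\mu$ is a compactly supported probability measure on $[0,\infty)$; $\lambda^*>0$ is the right endpoint of its support, and $s(\lambda)=\int\frac{d\mu(t)}{t-\lambda}$ for $\lambda>\lambda^*$. Define $G(e)=\sum_{j=1}^n\frac{b_j\pi_j}{1+\gamma b_j e}$. It is known (master equations) that there is a continuous (indeed smooth) real function $e(\lambda)$ on $(\lambda^*,\infty)$, never equal to a pole $-1/(\gamma b_j)$ of $G$ and with $a_iG(e(\lambda))\ne\lambda$, satisfying $s(\lambda)=\sum_{i=1}^p\frac{\omega_i}{a_iG(e(\lambda))-\lambda}$ and $e(\lambda)=\sum_{i=1}^p\frac{a_i\omega_i}{a_iG(e(\lambda))-\lambda}$. *)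

From Stdlib Require Import Reals Lra Lia.
Open Scope R_scope.

Fixpoint rsum (n : nat) (f : nat -> R) : R :=
  match n with
  | O => 0
  | S k => rsum k f + f k
  end.

Definition Gfun (gamma : R) (n : nat) (b pi : nat -> R) (e : R) : R :=
  rsum n (fun j => b j * pi j / (1 + gamma * b j * e)).

(* F is the distribution function t |-> mu((-oo,t]) of a probability measure
   mu on [0, +oo) : nondecreasing, right-continuous, 0 on (-oo,0),
   tending to 1 at +oo. *)
Definition cdf_on_nonneg (F : R -> R) : Prop :=
  (forall s t, s <= t -> F s <= F t) /\
  (forall t eps, 0 < eps -> exists delta, 0 < delta /\
      forall u, t <= u < t + delta -> F u - F t < eps) /\
  (forall t, t < 0 -> F t = 0) /\
  (forall eps, 0 < eps -> exists M, forall t, M <= t -> 1 - F t < eps).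

(* lstar is the right endpoint of the support of mu (in particular the
   support is compact): mu((lstar,+oo)) = 0 and mu((t,+oo)) > 0 for t < lstar *)
Definition support_right_endpoint (F : R -> R) (lstar : R) : Prop :=
  (forall t, lstar <= t -> F t = 1) /\ (forall t, t < lstar -> F t < 1).

Definition is_partition (a b : R) (m : nat) (x : nat -> R) : Prop :=
  x O = a /\ x m = b /\ (forall i, (i < m)%nat -> x i <= x (S i)).

Definition RS_sum (f F : R -> R) (m : nat) (x xi : nat -> R) : R :=
  rsum m (fun i => f (xi i) * (F (x (S i)) - F (x i))).

Definition RS_integral (f F : R -> R) (a b I : R) : Prop :=
  forall eps, 0 < eps -> exists delta, 0 < delta /\
    forall (m : nat) (x xi : nat -> R),
      is_partition a b m x ->
      (forall i, (i < m)%nat -> x i <= xi i <= x (S i)) ->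
      (forall i, (i < m)%nat -> x (S i) - x i < delta) ->
      Rabs (RS_sum f F m x xi - I) < eps.

From Stdlib Require Import Reals.
From Stdlib Require Import Lra Lia Psatz.
Open Scope R_scope.

(* Write g = G(e(l)).  Multiplying the master equation for e by g and
   subtracting l times the master equation for s, every term collapses to
   omega_i, so  g * e(l) - l * s(l) = sum_i omega_i = 1  (master_identity).

   Since mu lives on [0, lstar] and 1/(t - l) <= -1/l there, with strict
   inequality on the set [lstar/2, lstar] of positive mass, s(l) < -1/l.
   This is proved directly from the Riemann--Stieltjes definition: a
   telescoping comparison bounds every Riemann--Stieltjes sum by
   -1/l + D (1 - F(lstar/2)) with D < 0, and passing to the limit along
   uniform partitions gives the same bound for s(l).  Hence g * e(l) < 0.

   Finally, if e(l) >= 0 then every term of G is positive, so g > 0 and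
   g * e(l) >= 0, a contradiction; thus e(l) < 0, and then g > 0. *)

Lemma rsum_pos (n : nat) (f : nat -> R) :
  (0 < n)%nat -> (forall j, (j < n)%nat -> 0 < f j) -> 0 < rsum n f.
Proof.
  induction n as [|k IH]; intros Hn Hf; [lia|].
  simpl. destruct k as [|k].
  - simpl. specialize (Hf 0%nat ltac:(lia)). lra.
  - assert (0 < rsum (S k) f) by (apply IH; [lia | intros; apply Hf; lia]).
    specialize (Hf (S k) ltac:(lia)). lra.
Qed.

Lemma rsum_le_telescope (m : nat) (u : nat -> R) (Phi : nat -> R) :
  (forall i, (i < m)%nat -> u i <= Phi (S i) - Phi i) ->
  rsum m u <= Phi m - Phi 0%nat.
Proof.
  induction m as [|k IH]; intros Hu; simpl; [lra|].
  assert (rsum k u <= Phi k - Phi 0%nat) by (apply IH; intros; apply Hu; lia).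
  specialize (Hu k ltac:(lia)). lra.
Qed.

Lemma Rinv_le_neg (u v : R) : u <= v -> v < 0 -> / v <= / u.
Proof.
  intros Huv Hv.
  replace (/ v) with (- / (- v)) by (rewrite Rinv_opp; ring).
  replace (/ u) with (- / (- u)) by (rewrite Rinv_opp; ring).
  apply Ropp_le_contravar, Rinv_le_contravar; lra.
Qed.

Lemma partition_le_right (a b : R) (m : nat) (x : nat -> R) :
  is_partition a b m x -> forall i, (i <= m)%nat -> x i <= b.
Proof.
  intros [_ [Hxm Hxmono]].
  assert (Hdown : forall k, (k <= m)%nat -> x (m - k)%nat <= b).
  { induction k as [|k IH]; intros Hk.
    - rewrite Nat.sub_0_r. lra.
    - specialize (Hxmono (m - S k)%nat ltac:(lia)).
      replace (S (m - S k)) with (m - k)%nat in Hxmono by lia.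
      specialize (IH ltac:(lia)). lra. }
  intros i Hi. replace i with (m - (m - i))%nat by lia. apply Hdown. lia.
Qed.

Lemma uniform_partition (a b delta : R) :
  a < b -> 0 < delta ->
  exists m x, is_partition a b m x /\ (forall i, x (S i) - x i < delta).
Proof.
  intros Hab Hdelta.
  destruct (archimed_cor1 (delta / (b - a))) as [m [Hm Hm0]].
  { apply Rdiv_lt_0_compat; lra. }
  assert (HmR : 0 < INR m) by (apply lt_0_INR; lia).
  set (h := (b - a) / INR m).
  assert (Hh : 0 < h) by (apply Rdiv_lt_0_compat; lra).
  exists m, (fun i => a + INR i * h).
  split; [split; [|split]|].
  - simpl. ring.
  - unfold h. field. lra.
  - intros i _. rewrite S_INR. nra.
  - intros i. rewrite S_INR.
    assert (h < delta).
    { unfold h, Rdiv. replace delta with ((b - a) * (delta / (b - a))) by (field; lra).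
      apply Rmult_lt_compat_l; lra. }
    lra.
Qed.

Lemma RS_integral_le (f F : R -> R) (a b I K : R) :
  a < b -> RS_integral f F a b I ->
  (forall m x, is_partition a b m x ->
     RS_sum f F m x (fun i => x (S i)) <= K) ->
  I <= K.
Proof.
  intros Hab HI Hsums.
  apply Rle_plus_epsilon. intros eps Heps.
  destruct (HI eps Heps) as [delta [Hdelta Happrox]].
  destruct (uniform_partition a b delta Hab Hdelta) as [m [x [Hx Hmesh]]].
  assert (Hclose : Rabs (RS_sum f F m x (fun i => x (S i)) - I) < eps).
  { apply Happrox; [exact Hx | | intros i _; apply Hmesh].
    intros i Hi. destruct Hx as [_ [_ Hmono]]. specialize (Hmono i Hi). lra. }
  specialize (Hsums m x Hx).
  apply Rabs_def2 in Hclose. lra.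
Qed.

Section StieltjesBound.

Variables (F : R -> R) (lstar l : R).
Hypothesis HF : cdf_on_nonneg F.
Hypothesis Hlstar : support_right_endpoint F lstar.
Hypothesis Hlstar_pos : 0 < lstar.
Hypothesis Hl : lstar < l.

(* The cut point c splits [0, lstar]; mu gives positive mass to (c, lstar]. *)
Let c := lstar / 2.

(* On [c, lstar] the kernel 1/(t - l) is at most 1/(c - l) = -1/l + D. *)
Let D := / (c - l) + / l.

(* D < 0 is the gain of the kernel bound on [c, lstar] over the global one. *)
Lemma D_neg : D < 0.
Proof.
  unfold D, c.
  assert (/ l < / (l - lstar / 2))
    by (apply Rinv_lt_contravar; [apply Rmult_lt_0_compat |]; lra).
  replace (lstar / 2 - l) with (- (l - lstar / 2)) by ring.
  rewrite Rinv_opp. lra.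
Qed.

Let F_mono : forall s t, s <= t -> F s <= F t := proj1 HF.
Let F_neg : forall t, t < 0 -> F t = 0 := proj1 (proj2 (proj2 HF)).

(* Comparison function: increments of Phi dominate kernel-weighted increments of F. *)
Let Phi (t : R) : R := - / l * F t + D * Rmax (F t - F c) 0.

Lemma increment_bound (u v : R) :
  u <= v -> v <= lstar -> / (v - l) * (F v - F u) <= Phi v - Phi u.
Proof.
  intros Huv Hv. unfold Phi.
  assert (HdF : 0 <= F v - F u) by (assert (F u <= F v) by (apply F_mono, Huv); lra).
  destruct (Rlt_le_dec v 0) as [Hv0 | Hv0].
  - rewrite (F_neg v Hv0), (F_neg u) by lra. lra.
  - assert (Hker : / (v - l) <= - / l).
    { rewrite <- Rinv_opp. apply Rinv_le_neg; lra. }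
    destruct (Rlt_le_dec v c) as [Hvc | Hvc].
    + assert (F v <= F c) by (apply F_mono; lra).
      assert (F u <= F c) by (apply F_mono; lra).
      rewrite (Rmax_right (F v - F c)), (Rmax_right (F u - F c)) by lra.
      assert (/ (v - l) * (F v - F u) <= - / l * (F v - F u))
        by (apply Rmult_le_compat_r; lra).
      lra.
    + assert (Hkerc : / (v - l) <= / (c - l)) by (apply Rinv_le_neg; unfold c in *; lra).
      assert (F c <= F v) by (apply F_mono; lra).
      rewrite (Rmax_left (F v - F c)) by lra.
      assert (F u - F c <= Rmax (F u - F c) 0) by apply Rmax_l.
      assert (0 <= Rmax (F u - F c) 0) by apply Rmax_r.
      assert (/ (v - l) * (F v - F u) <= / (c - l) * (F v - F u))
        by (apply Rmult_le_compat_r; lra).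
      assert (D * (F v - F u) <= D * (F v - F c - Rmax (F u - F c) 0))
        by (apply Rmult_le_compat_neg_l; [left; apply D_neg | lra]).
      unfold D in *. lra.
Qed.

(* Every right-tagged Riemann--Stieltjes sum over [-1, lstar] is at most
   Phi lstar - Phi (-1) = -1/l + D (1 - F c). *)
Lemma RS_sum_bound (m : nat) (x : nat -> R) :
  is_partition (-1) lstar m x ->
  RS_sum (fun t => / (t - l)) F m x (fun i => x (S i)) <= - / l + D * (1 - F c).
Proof.
  intros Hx.
  pose proof (partition_le_right _ _ _ _ Hx) as Hxle.
  destruct Hx as [Hx0 [Hxm Hxmono]].
  assert (HFl : F lstar = 1) by (apply (proj1 Hlstar); lra).
  assert (HFc : F c < 1) by (apply (proj2 Hlstar); unfold c; lra).
  assert (HFm1 : F (-1) = 0) by (apply F_neg; lra).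
  assert (HFc0 : 0 <= F c) by (rewrite <- HFm1; apply F_mono; unfold c; lra).
  assert (HPhi : Phi lstar - Phi (-1) = - / l + D * (1 - F c)).
  { unfold Phi. rewrite HFl, HFm1, Rmax_left, Rmax_right by lra. ring. }
  rewrite <- HPhi, <- Hx0, <- Hxm.
  apply (rsum_le_telescope m _ (fun i => Phi (x i))).
  intros i Hi. apply increment_bound; [apply Hxmono, Hi | apply Hxle; lia].
Qed.

(* The gap D (1 - F c) < 0 makes the bound strict: s(l) < -1/l. *)
Lemma stieltjes_transform_lt (s0 : R) :
  RS_integral (fun t => / (t - l)) F (-1) lstar s0 -> s0 < - / l.
Proof.
  intros Hs0.
  assert (Hle : s0 <= - / l + D * (1 - F c)).
  { apply (RS_integral_le (fun t => / (t - l)) F (-1) lstar);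
      [lra | exact Hs0 | exact RS_sum_bound]. }
  assert (HFc : F c < 1) by (apply (proj2 Hlstar); unfold c; lra).
  assert (D * (1 - F c) < 0) by (apply Rmult_neg_pos; [apply D_neg | lra]).
  lra.
Qed.

End StieltjesBound.

Lemma master_identity (p : nat) (a omega : nat -> R) (g l : R) :
  (forall i, (i < p)%nat -> a i * g - l <> 0) ->
  g * rsum p (fun i => a i * omega i / (a i * g - l))
  - l * rsum p (fun i => omega i / (a i * g - l)) = rsum p omega.
Proof.
  induction p as [|k IH]; intros Hne; simpl; [ring|].
  rewrite <- IH by (intros; apply Hne; lia).
  field. apply Hne. lia.
Qed.

Lemma Gfun_pos_of_nonneg (gamma : R) (n : nat) (b pi : nat -> R) (e : R) :
  0 < gamma -> (0 < n)%nat ->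
  (forall j, (j < n)%nat -> 0 < b j) -> (forall j, (j < n)%nat -> 0 < pi j) ->
  0 <= e -> 0 < Gfun gamma n b pi e.
Proof.
  intros Hgamma Hn Hb Hpi He.
  apply rsum_pos; [exact Hn|]. intros j Hj.
  specialize (Hb j Hj). specialize (Hpi j Hj).
  assert (0 <= gamma * b j * e) by (apply Rmult_le_pos; [nra | exact He]).
  apply Rdiv_lt_0_compat; [apply Rmult_lt_0_compat | ]; lra.
Qed.

Theorem corollary3p5
  (gamma : R) (p : nat) (a omega : nat -> R) (n : nat) (b pi : nat -> R)
  (F : R -> R) (lstar : R) (s e : R -> R)
  (Hgamma : 0 < gamma)
  (Ha : forall i, (i < p)%nat -> 0 < a i)
  (Homega : forall i, (i < p)%nat -> 0 < omega i)
  (Homega1 : rsum p omega = 1)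
  (Hb : forall j, (j < n)%nat -> 0 < b j)
  (Hpi : forall j, (j < n)%nat -> 0 < pi j)
  (Hpi1 : rsum n pi = 1)
  (* mu : probability measure on [0,oo) with distribution function F,
     compact support with right endpoint lstar > 0 *)
  (HF : cdf_on_nonneg F)
  (Hlstar : support_right_endpoint F lstar)
  (Hlstar_pos : 0 < lstar)
  (* s(l) = int dmu(t)/(t - l), for l > lstar (mu lives on [0,lstar]) *)
  (Hs : forall l, lstar < l -> RS_integral (fun t => / (t - l)) F (-1) lstar (s l))
  (* properties of e from the master equations *)
  (He_cont : forall l, lstar < l -> continuity_pt e l)
  (He_pole : forall l j, lstar < l -> (j < n)%nat -> e l <> - / (gamma * b j))
  (He_ne : forall l i, lstar < l -> (i < p)%nat -> a i * Gfun gamma n b pi (e l) <> l)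
  (Hmaster_s : forall l, lstar < l ->
     s l = rsum p (fun i => omega i / (a i * Gfun gamma n b pi (e l) - l)))
  (Hmaster_e : forall l, lstar < l ->
     e l = rsum p (fun i => a i * omega i / (a i * Gfun gamma n b pi (e l) - l))) :
  forall l, lstar < l -> 0 < Gfun gamma n b pi (e l) /\ e l < 0.
Proof.
  intros l Hl.
  set (g := Gfun gamma n b pi (e l)).
  assert (Hidentity : g * e l - l * s l = 1).
  { rewrite Hmaster_e, Hmaster_s, <- Homega1 by exact Hl. fold g.
    apply master_identity. intros i Hi Hzero. apply (He_ne l i Hl Hi). fold g. lra. }
  assert (Hs_lt : s l < - / l)
    by exact (stieltjes_transform_lt F lstar l HF Hlstar Hlstar_pos Hl (s l) (Hs l Hl)).
  assert (Hprod : g * e l < 0).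
  { assert (l * s l < l * - / l) by (apply Rmult_lt_compat_l; lra).
    replace (l * - / l) with (-1) in * by (field; lra). lra. }
  assert (Hn : (0 < n)%nat) by (destruct n; [simpl in Hpi1; lra | lia]).
  destruct (Rlt_le_dec (e l) 0) as [Hel | Hel].
  - split; [nra | exact Hel].
  - assert (0 < g) by (apply Gfun_pos_of_nonneg; assumption). nra.
Qed.
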